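(* Let $\mathfrak A,\mathfrak B$ be $L$-algebras and $H:\mathfrak A\to\mathfrak B$ an isomorphism. Then for all $a,b,c,d\in A$, $$a:b::_{\mathfrak A}c:d\iff Ha:Hb::_{\mathfrak B}Hc:Hd,$$ i.e. $H$ is a proportional homomorphism.
   Context: $L$ is a language of algebras (constants are $0$-ary function symbols), $X$ a denumerable set of variables, $T_{L,X}$ the $L$-terms, $X(s)$ the variables of $s$, $s^{\mathfrak A}$ the induced term function. A justification is a pair $s\to t$ of terms with $X(t)\subseteq X(s)$. $\uparrow_{\mathfrak A}(a\to b)$ is the set of justifications $s\to t$ with $a=s^{\mathfrak A}(\mathbf o)$, $b=t^{\mathfrak A}(\mathbf o)$ for some tuple $\mathbf o$ over $A$; $\uparrow_{(\mathfrak A,\mathfrak B)}(a\to b:\!\cdot\,c\to d):=\uparrow_{\mathfrak A}(a\to b)\cap\uparrow_{\mathfrak B}(c\to d)$. A justification is trivial in $(\mathfrak A,\mathfrak B)$ if it lies in $\uparrow_{(\mathfrak A,\mathfrak B)}(a'\to b':\!\cdot\,c'\to d')$ for all $a',b'\in A,c',d'\in B$. The arrow proportion $a\to b:\!\cdot\,c\to d$ holds in $(\mathfrak A,\mathfrak B)$ iff either (i) all justifications in $\uparrow_{\mathfrak A}(a\to b)\cup\uparrow_{\mathfrak B}(c\to d)$ are trivial, or (ii) $J_d:=\uparrow_{(\mathfrak A,\mathfrak B)}(a\to b:\!\cdot\,c\to d)$ contains a non-trivial justification and for every $d'\in B$, $J_d\subseteq J_{d'}$ implies that $J_{d'}$ contains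 a non-trivial justification and $J_{d'}\subseteq J_d$ (inclusions ignoring trivial justifications). Then $a:b::_{(\mathfrak A,\mathfrak B)}c:d$ iff $a\to b:\!\cdot\,c\to d$ and $b\to a:\!\cdot\,d\to c$ hold in $(\mathfrak A,\mathfrak B)$ and $c\to d:\!\cdot\,a\to b$ and $d\to c:\!\cdot\,b\to a$ hold in $(\mathfrak B,\mathfrak A)$. We write $::_{\mathfrak A}$ for $::_{(\mathfrak A,\mathfrak A)}$. *)

From mathcomp Require Import all_boot.
Set Implicit Arguments. Unset Strict Implicit. Unset Printing Implicit Defensive.

Record language := Language { sym : Type; arity : sym -> nat }.

Record algebra (L : language) := Algebra {
  carrier :> Type;
  op : forall f : sym L, ('I_(arity f) -> carrier) -> carrier }.

Inductive term (L : language) : Type :=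
| Var : nat -> term L
| App : forall f : sym L, ('I_(arity f) -> term L) -> term L.

Inductive occurs (L : language) (x : nat) : term L -> Prop :=
| occ_var : occurs x (Var L x)
| occ_app : forall f (args : 'I_(arity f) -> term L) (i : 'I_(arity f)),
    occurs x (args i) -> occurs x (App args).

Fixpoint eval (L : language) (A : algebra L) (o : nat -> A) (s : term L) : A :=
  match s with
  | Var x => o x
  | App f args => @op L A f (fun i => eval o (args i))
  end.

Definition justification (L : language) (s t : term L) : Prop :=
  forall x, occurs x t -> occurs x s.

Definition up1 (L : language) (A : algebra L) (a b : A) (s t : term L) : Prop :=
  justification s t /\ exists o : nat -> A, a = eval o s /\ b = eval o t.

Definition up2 (L : language) (A B : algebra L) (a b : A) (c d : B)
  (s t : term L) : Prop := up1 a b s t /\ up1 c d s t.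

Definition trivial_just (L : language) (A B : algebra L) (s t : term L) : Prop :=
  forall (a' b' : A) (c' d' : B), up2 a' b' c' d' s t.

Definition subset_nt (L : language) (A B : algebra L)
  (J J' : term L -> term L -> Prop) : Prop :=
  forall s t, J s t -> ~ trivial_just A B s t -> J' s t.

Definition has_nontrivial (L : language) (A B : algebra L)
  (J : term L -> term L -> Prop) : Prop :=
  exists s t, J s t /\ ~ trivial_just A B s t.

Definition arrow_prop (L : language) (A B : algebra L) (a b : A) (c d : B) : Prop :=
  (forall s t, (up1 a b s t \/ up1 c d s t) -> trivial_just A B s t)
  \/
  (has_nontrivial A B (up2 a b c d) /\
   forall d' : B,
     subset_nt A B (up2 a b c d) (up2 a b c d') ->
     has_nontrivial A B (up2 a b c d') /\ subset_nt A B (up2 a b c d') (up2 a b c d)).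

Definition analogy (L : language) (A B : algebra L) (a b : A) (c d : B) : Prop :=
  [/\ arrow_prop a b c d, arrow_prop b a d c,
      arrow_prop c d a b & arrow_prop d c b a].

Definition is_hom (L : language) (A B : algebra L) (H : A -> B) : Prop :=
  forall (f : sym L) (args : 'I_(arity f) -> A),
    H (@op L A f args) = @op L B f (fun i => H (args i)).

Definition is_iso (L : language) (A B : algebra L) (H : A -> B) : Prop :=
  is_hom H /\ bijective H.

From mathcomp Require Import all_boot.
From Stdlib Require Import FunctionalExtensionality Setoid.

Set Implicit Arguments.
Unset Strict Implicit.

(* Term functions commute with homomorphisms, so an isomorphism and its inverse
   carry witnesses of a -> b to witnesses of Ha -> Hb and back.  Hence every set
   of justifications occurring in the definition of an analogy, and triviality
   itself, are invariant under isomorphisms (applied to both algebras of the pair). *)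

Section Homomorphism.
Variables (L : language) (A B : algebra L) (H : A -> B).
Hypothesis homH : is_hom H.

Lemma eval_hom (o : nat -> A) (s : term L) :
  eval (fun x => H (o x)) s = H (eval o s).
Proof.
elim: s => [x|f args IH] //=; rewrite homH; congr (op _).
exact: functional_extensionality.
Qed.

Lemma up1_hom (a b : A) (s t : term L) : up1 a b s t -> up1 (H a) (H b) s t.
Proof.
case=> just_st [o [-> ->]]; split=> //.
by exists (fun x => H (o x)); rewrite !eval_hom.
Qed.

Lemma can_hom_inv (K : B -> A) : cancel H K -> cancel K H -> is_hom K.
Proof.
move=> HK KH f args; apply: (can_inj HK); rewrite KH homH; congr (op _).
by apply: functional_extensionality => i; rewrite KH.
Qed.

End Homomorphism.

Lemma up1_iso (L : language) (A B : algebra L) (H : A -> B) (isoH : is_iso H)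
    (a b : A) (s t : term L) :
  up1 a b s t <-> up1 (H a) (H b) s t.
Proof.
case: isoH => homH [K HK KH]; split; first exact: up1_hom.
by move/(up1_hom (can_hom_inv homH HK KH)); rewrite !HK.
Qed.

Section IsomorphicPairs.
Variables (L : language) (A1 A2 B1 B2 : algebra L).
Variables (H1 : A1 -> B1) (H2 : A2 -> B2).
Hypotheses (isoH1 : is_iso H1) (isoH2 : is_iso H2).

Lemma up2_iso (a b : A1) (c d : A2) (s t : term L) :
  up2 a b c d s t <-> up2 (H1 a) (H1 b) (H2 c) (H2 d) s t.
Proof. by rewrite /up2 (up1_iso isoH1) (up1_iso isoH2). Qed.

Lemma trivial_just_iso (s t : term L) :
  trivial_just A1 A2 s t <-> trivial_just B1 B2 s t.
Proof.
case: isoH1 => _ [K1 _ H1K1]; case: isoH2 => _ [K2 _ H2K2].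
split=> triv_st a b c d; last by rewrite up2_iso.
by rewrite -(H1K1 a) -(H1K1 b) -(H2K2 c) -(H2K2 d) -up2_iso.
Qed.

Lemma has_nontrivial_iso (a b : A1) (c d : A2) :
  has_nontrivial A1 A2 (up2 a b c d) <->
  has_nontrivial B1 B2 (up2 (H1 a) (H1 b) (H2 c) (H2 d)).
Proof.
by split=> -[s [t nt_st]]; exists s, t; rewrite up2_iso trivial_just_iso in nt_st *.
Qed.

Lemma subset_nt_iso (a b a' b' : A1) (c d c' d' : A2) :
  subset_nt A1 A2 (up2 a b c d) (up2 a' b' c' d') <->
  subset_nt B1 B2 (up2 (H1 a) (H1 b) (H2 c) (H2 d)) (up2 (H1 a') (H1 b') (H2 c') (H2 d')).
Proof.
split=> sub s t; move: (sub s t).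
  by rewrite -!up2_iso -trivial_just_iso.
by rewrite !up2_iso trivial_just_iso.
Qed.

Lemma arrow_prop_iso (a b : A1) (c d : A2) :
  arrow_prop a b c d <-> arrow_prop (H1 a) (H1 b) (H2 c) (H2 d).
Proof.
case: isoH2 => _ [K2 _ H2K2].
rewrite /arrow_prop has_nontrivial_iso; split=> -[triv|[nt maximal]].
- by left=> s t; rewrite -trivial_just_iso -(up1_iso isoH1) -(up1_iso isoH2); exact: triv.
- right; split=> // d'; rewrite -(H2K2 d') -!subset_nt_iso -has_nontrivial_iso.
  exact: maximal.
- by left=> s t; rewrite trivial_just_iso (up1_iso isoH1) (up1_iso isoH2); exact: triv.
- by right; split=> // d'; rewrite !subset_nt_iso has_nontrivial_iso; exact: maximal.
Qed.

End IsomorphicPairs.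

Lemma analogy_iso (L : language) (A1 A2 B1 B2 : algebra L)
    (H1 : A1 -> B1) (H2 : A2 -> B2) (isoH1 : is_iso H1) (isoH2 : is_iso H2)
    (a b : A1) (c d : A2) :
  analogy a b c d <-> analogy (H1 a) (H1 b) (H2 c) (H2 d).
Proof.
have iso12 := arrow_prop_iso isoH1 isoH2; have iso21 := arrow_prop_iso isoH2 isoH1.
split=> -[? ? ? ?]; split;
  by [rewrite iso12 | rewrite iso21 | rewrite -iso12 | rewrite -iso21].
Qed.

Theorem mainTheorem3 (L : language) (A B : algebra L) (H : A -> B) :
  is_iso H ->
  forall a b c d : A,
    analogy (A := A) (B := A) a b c d <->
    analogy (A := B) (B := B) (H a) (H b) (H c) (H d).
Proof. by move=> isoH; apply: analogy_iso. Qed.
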